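(* Let $\Gamma=([n],E)$ be a connected simple graph and let $M\subseteq[n]$ be a subset of maximal cardinality such that the induced subgraph $\Gamma|_M$ is isomorphic to the path $L_{|M|}$. Then for every integer $k\ge|M|$, $\Psi^k_q(\Gamma^{\mathbf 1})=\Psi^{|M|-1}_q(\Gamma^{\mathbf 1})$.
   Context: $L_r$ is the path graph on $r$ vertices. Decorated graphs: a decorated graph $\Gamma^w=(V,E,w)$ is a finite simple graph with $w:E\to\{1,2,\dots\}$; $\Gamma^{\mathbf 1}$ is $\Gamma$ with $w\equiv1$. For $S\subseteq V$: $\Gamma^w|_S$ is the induced decorated subgraph on $S$; $\Gamma^w/S$ is the decorated graph on $V\setminus S$ with an edge $uv$ whenever $\Gamma$ has a path from $u$ to $v$ with all internal vertices in $S$ (a direct edge counting as a path without internal vertices), decorated by the minimum over such paths of the sum of decorations along it. For an integer $m\ge0$, $\mathrm{pr}_m$ deletes all edges of decoration $>m$. Let $\mathcal{G}^{W,m}$ be the Hopf algebra spanned by isomorphism classes of decorated graphs (graded by number of vertices), with product disjoint union and coproduct $\Delta_m(\Gamma^w)=\sum_{S\subseteq V}\mathrm{pr}_m(\Gamma^w|_S)\otimes\mathrm{pr}_m(\Gamma^w/S)$. Let $\zeta_q(\Gamma^w)=q^{|V|-c(\Gamma)}$, $c$ = number of connected components. For $\alpha=(\alpha_1,\dots,\alpha_k)\models n$, $M_\alpha=\sum_{i_1<\cdots<i_k}x_{i_1}^{\alpha_1}\cdots x_{i_k}^{\alpha_k}$. Define $\Psi^m_q(\Gamma^w)=\sum_{\alpha\models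 n}(\zeta_q)_\alpha(\Gamma^w)M_\alpha$ with $(\zeta_q)_\alpha=\zeta_q^{\otimes k}\circ(p_{\alpha_1}\otimes\cdots\otimes p_{\alpha_k})\circ\Delta_m^{(k-1)}$ ($p_i$ projection to degree $i$, $\Delta_m^{(k-1)}$ iterated coproduct), i.e. the unique morphism of combinatorial Hopf algebras $(\mathcal{G}^{W,m},\zeta_q)\to(\mathcal{Q}Sym,\zeta)$. *)

From mathcomp Require Import all_boot all_algebra.
Set Implicit Arguments. Unset Strict Implicit. Unset Printing Implicit Defensive.
Import GRing.Theory.
Local Open Scope ring_scope.

(* A decorated graph on an ambient finite type T: vertex set dV, and a
   decoration dw x y (0 = no edge, otherwise the decoration, >= 1).
   Edges are only meaningful between distinct vertices of dV. *)
Record dgraph (T : finType) := DGraph { dV : {set T}; dw : T -> T -> nat }.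

Section DG.
Variable T : finType.

Definition dedge (G : dgraph T) : rel T :=
  fun x y => [&& x \in dV G, y \in dV G, x != y & (0 < dw G x y)%N].

Definition ncomp (G : dgraph T) : nat := n_comp (dedge G) (mem (dV G)).

Definition zeta (R : comNzRingType) (q : R) (G : dgraph T) : R :=
  q ^+ (#|dV G| - ncomp G).

Definition induced (G : dgraph T) (S : {set T}) : dgraph T :=
  DGraph (dV G :&: S)
    (fun x y => if (x \in dV G :&: S) && (y \in dV G :&: S) then dw G x y else 0%N).

Definition path_edges (u : T) (p : seq T) (v : T) : seq (T * T) :=
  let s := u :: rcons p v in zip s (behead s).

Definition path_valid (G : dgraph T) u p v : bool :=
  all (fun e => (0 < dw G e.1 e.2)%N) (path_edges u p v).

Definition path_weight (G : dgraph T) u p v : nat :=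
  sumn [seq dw G e.1 e.2 | e <- path_edges u p v].

Definition interiors (S : {set T}) : seq (seq T) :=
  flatten [seq map val (enum [pred t : k.-tuple T | uniq t && all (fun x => x \in S) t])
          | k <- iota 0 #|T|.+1].

Definition path_weights (G : dgraph T) (S : {set T}) u v : seq nat :=
  [seq path_weight G u p v | p <- interiors (dV G :&: S) & path_valid G u p v].

Definition seqmin (s : seq nat) : nat :=
  if s is c :: cs then foldr minn c cs else 0%N.

Definition quot (G : dgraph T) (S : {set T}) : dgraph T :=
  DGraph (dV G :\: S)
    (fun x y => if [&& x \in dV G :\: S, y \in dV G :\: S & x != y]
                then seqmin (path_weights G S x y) else 0%N).

Definition pr (m : nat) (G : dgraph T) : dgraph T :=
  DGraph (dV G) (fun x y => if (dw G x y <= m)%N then dw G x y else 0%N).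

(* (zeta_q)_alpha = zeta_q^{(x)k} o (p_{a1} (x) ... (x) p_{ak}) o Delta_m^{(k-1)},
   with Delta^{(k-1)} = (id (x) Delta^{(k-2)}) o Delta and Delta^{(0)} = id. *)
Fixpoint zeta_comp (R : comNzRingType) (q : R) (m : nat) (al : seq nat) (G : dgraph T) : R :=
  match al with
  | [::] => (#|dV G| == 0%N)%:R
  | a :: al' =>
      match al' with
      | [::] => (#|dV G| == a)%:R * zeta q G
      | _ :: _ =>
          \sum_(S : {set T} | (S \subset dV G) && (#|S| == a))
             zeta q (pr m (induced G S)) * zeta_comp q m al' (pr m (quot G S))
      end
  end.

End DG.

Definition is_composition (n : nat) (al : seq nat) : bool :=
  all (fun a => 0 < a)%N al && (sumn al == n).

(* Psi^m_q(Gamma^w), represented by its coefficients in the monomial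
   quasisymmetric basis: alpha |-> (zeta_q)_alpha(Gamma^w) for alpha |= n,
   and 0 on sequences that are not compositions of n. *)
Definition Psi (T : finType) (R : comNzRingType) (m : nat) (q : R) (G : dgraph T)
  : seq nat -> R :=
  fun al => if is_composition #|dV G| al then zeta_comp q m al G else 0.

Definition dec_one (T : finType) (e : rel T) : dgraph T :=
  DGraph [set: T] (fun x y => nat_of_bool (e x y)).

Definition simple_graph (T : finType) (e : rel T) : Prop :=
  (forall x, ~~ e x x) /\ (forall x y, e x y = e y x).

Definition connected_graph (T : finType) (e : rel T) : Prop :=
  (0 < #|T|)%N /\ (forall x y, connect e x y).

Definition path_graph (r : nat) : rel 'I_r :=
  fun i j => (i.+1 == j)%N || (j.+1 == i)%N.

Definition induces_path (T : finType) (e : rel T) (M : {set T}) : Prop :=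
  exists f : 'I_#|M| -> T,
    [/\ injective f, (forall i, f i \in M) &
        (forall i j, e (f i) (f j) = path_graph i j)].

(* In each graph occurring in the iterated coproduct of Gamma^1, namely an
   iterated contraction Gamma/H and its induced subgraphs, an edge uv exists
   iff Gamma has a walk from u to v through H, and its decoration is at most
   the number of edges of any such walk.  A shortest such walk has no chord,
   so it spans an induced path of Gamma and has at most |M| vertices.  Hence
   all decorations are at most |M| - 1, every pr_m with m >= |M| - 1 acts as
   the identity, and all coefficients (zeta_q)_alpha of Psi^m_q agree. *)

From mathcomp Require Import all_boot all_algebra.
From mathcomp Require Import zify.
From Stdlib Require Import FunctionalExtensionality.
Set Implicit Arguments. Unset Strict Implicit. Unset Printing Implicit Defensive.

Lemma seqmin_le s a : a \in s -> seqmin s <= a.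
Proof.
case: s => [|c cs] //=; elim: cs a => [|d cs IH] a /=; first by rewrite inE => /eqP->.
rewrite !in_cons => /or3P[/eqP->|/eqP->|a_cs].
- by apply: leq_trans (geq_minr _ _) (IH _ _); rewrite mem_head.
- exact: geq_minl.
- by apply: leq_trans (geq_minr _ _) (IH _ _); rewrite in_cons a_cs orbT.
Qed.

Lemma seqmin_gt0 s : s != [::] -> all (leq 1) s -> 0 < seqmin s.
Proof.
case: s => [|c cs] //= _ /andP[c_gt0]; elim: cs => [|d cs IH] //= /andP[d_gt0 cs_gt0].
by rewrite leq_min d_gt0 IH.
Qed.

Lemma mem_zip_behead (T : eqType) (s : seq T) (a b : T) :
  uniq s -> (a, b) \in zip s (behead s) -> [/\ a \in s, b \in s & a != b].
Proof.
elim: s => [|x [|y s] IH] //= /andP[xNys s_uniq].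
case/predU1P => [[-> ->]|ab_s].
  rewrite mem_head in_cons mem_head orbT; split=> //.
  by apply: contraNneq xNys => ->; apply: mem_head.
by have [a_s b_s ab] := IH s_uniq ab_s; rewrite (in_cons x) a_s (in_cons x) b_s !orbT.
Qed.

Section PathShortcut.
Variables (T : Type) (e : rel T).

Lemma last_take (x : T) s i : i <= size s -> last x (take i s) = nth x (x :: s) i.
Proof.
by move=> i_le; rewrite (last_nth x) size_takel // -[x :: _]/(take i.+1 (x :: s)) nth_take.
Qed.

Lemma path_shortcut x s i j : path e x s -> i < j <= size s ->
  e (nth x (x :: s) i) (nth x (x :: s) j) -> path e x (take i s ++ drop j.-1 s).
Proof.
case: j => // j walk /andP[ij j_lt] /= chord.
have i_le : i <= size s := ltnW (leq_trans ij j_lt).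
rewrite cat_path take_path // last_take // (drop_nth x j_lt) /= chord /=.
by move: walk; rewrite -{1}(cat_take_drop j.+1 s) cat_path last_take // => /andP[_].
Qed.

End PathShortcut.

Section DecoratedGraphs.
Variable T : finType.
Implicit Types (G : dgraph T) (S : {set T}).

Lemma mem_interiors (S : {set T}) p :
  (p \in interiors S) = uniq p && all [in S] p.
Proof.
apply/flattenP/andP => [[s /mapP[k _ ->] /mapP[t]]|[p_uniq pS]].
  by rewrite mem_enum => /andP[] ? ? ->.
pose P := [pred t : (size p).-tuple T | uniq t && all [in S] t].
exists (map val (enum P)).
  apply/mapP; exists (size p) => //.
  by rewrite mem_iota add0n ltnS -(card_uniqP p_uniq) max_card.
by apply/mapP; exists (in_tuple p); rewrite // mem_enum inE p_uniq.
Qed.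

(* Decorations [dw G x x] of loops are junk and are ignored. *)
Definition dg_equiv G G' :=
  dV G = dV G' /\ {in dV G &, forall x y, x != y -> dw G x y = dw G' x y}.

Lemma dg_equiv_sym G G' : dg_equiv G G' -> dg_equiv G' G.
Proof. by case=> eqV eqw; split=> // x y; rewrite -eqV => xG yG xy; rewrite eqw. Qed.

Lemma dedge_equiv G G' : dg_equiv G G' -> dedge G =2 dedge G'.
Proof.
case=> eqV eqw x y; rewrite /dedge -eqV.
case: (boolP (x \in dV G)) (boolP (y \in dV G)) => [xG|//] [yG|//].
by case: eqP => //= /eqP/eqw->.
Qed.

Lemma zeta_equiv (R : comNzRingType) (q : R) G G' :
  dg_equiv G G' -> zeta q G = zeta q G'.
Proof.
by move=> eqG; rewrite /zeta /ncomp (eq_n_comp (eq_connect (dedge_equiv eqG))) eqG.1.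
Qed.

Lemma induced_equiv G G' S : dg_equiv G G' -> dg_equiv (induced G S) (induced G' S).
Proof.
case=> eqV eqw; split; rewrite /= -eqV // => x y xGS yGS xy; rewrite xGS yGS.
by apply: eqw xy; [move: xGS | move: yGS]; rewrite inE => /andP[].
Qed.

Lemma pr_equiv m G G' : dg_equiv G G' -> dg_equiv (pr m G) (pr m G').
Proof. by case=> eqV eqw; split=> //= x y xG yG xy; rewrite eqw. Qed.

Section ContractionPaths.
Variables (G : dgraph T) (S : {set T}) (u v : T) (p : seq T).
Hypotheses (uGS : u \in dV G :\: S) (vGS : v \in dV G :\: S) (uv : u != v).
Hypothesis p_int : p \in interiors (dV G :&: S).

Lemma contraction_path_uniq : uniq (u :: rcons p v).
Proof.
move: p_int; rewrite mem_interiors => /andP[p_uniq pGS].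
have notin_p z : z \in dV G :\: S -> z \notin p.
  by rewrite inE => /andP[zNS _]; apply/negP => /(allP pGS); rewrite inE (negPf zNS) andbF.
by rewrite /= rcons_uniq p_uniq mem_rcons in_cons negb_or uv !notin_p.
Qed.

Lemma contraction_path_edge a b : (a, b) \in path_edges u p v ->
  [/\ a \in dV G, b \in dV G & a != b].
Proof.
move=> /(mem_zip_behead contraction_path_uniq)[a_p b_p ab].
have inG z : z \in u :: rcons p v -> z \in dV G.
  rewrite in_cons mem_rcons in_cons => /or3P[/eqP->|/eqP->|].
  - by move: uGS; rewrite inE => /andP[].
  - by move: vGS; rewrite inE => /andP[].
  by move: p_int; rewrite mem_interiors => /andP[_ /allP pGS] /pGS; rewrite inE => /andP[].
by rewrite !inG.
Qed.

End ContractionPaths.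

Lemma quot_equiv G G' S : dg_equiv G G' -> dg_equiv (quot G S) (quot G' S).
Proof.
move=> [eqV eqw]; split; rewrite /= -eqV // => x y xGS yGS xy; rewrite xGS yGS xy /=.
rewrite /path_weights -eqV; congr seqmin.
have eq_path p : p \in interiors (dV G :&: S) ->
    path_valid G x p y = path_valid G' x p y /\ path_weight G x p y = path_weight G' x p y.
  move=> p_int; have edge := contraction_path_edge xGS yGS xy p_int.
  have eq_edge : {in path_edges x p y, forall e, dw G e.1 e.2 = dw G' e.1 e.2}.
    by move=> [a b] /edge[aG bG ab]; rewrite eqw.
  split; first by apply: eq_in_all => e /eq_edge ->.
  by rewrite /path_weight; congr sumn; apply/eq_in_map.
rewrite (eq_in_filter (fun p p_int => (eq_path p p_int).1)).
by apply/eq_in_map => p; rewrite mem_filter => /andP[_ /eq_path[]].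
Qed.

Lemma zeta_comp_equiv (R : comNzRingType) (q : R) m al G G' :
  dg_equiv G G' -> zeta_comp q m al G = zeta_comp q m al G'.
Proof.
elim: al G G' => [|a [|b al] IH] G G' eqG /=; first by rewrite eqG.1.
  by rewrite eqG.1 (zeta_equiv q eqG).
apply: eq_big => [S|S _]; first by rewrite eqG.1.
congr (_ * _)%R; first exact/zeta_equiv/pr_equiv/induced_equiv.
exact: (IH _ _ (pr_equiv m (quot_equiv S eqG))).
Qed.

Definition dw_bounded N G := {in dV G &, forall x y, x != y -> dw G x y <= N}.

Lemma pr_bounded N m G : dw_bounded N G -> N <= m -> dg_equiv (pr m G) G.
Proof. by move=> bG Nm; split=> //= x y xG yG xy; rewrite (leq_trans (bG _ _ xG yG xy) Nm). Qed.

Lemma dw_bounded_induced N G S : dw_bounded N G -> dw_bounded N (induced G S).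
Proof.
move=> bG x y /= xGS yGS xy; rewrite xGS yGS.
by apply: bG xy; [move: xGS | move: yGS]; rewrite inE => /andP[].
Qed.

End DecoratedGraphs.

Section Walks.
Variables (T : finType) (e : rel T).
Implicit Types (G : dgraph T) (H S : {set T}).

Definition walk_in H x p y := path e x (rcons p y) && all [in H] p.

(* The invariant of the iterated contraction of [dec_one e] by the vertices
   of [H]. *)
Record walk_decorated G H : Prop := WalkDecorated {
  dw_gt0_walk : {in dV G &, forall x y, x != y ->
    0 < dw G x y <-> exists p, walk_in H x p y};
  dw_le_walk : {in dV G &, forall x y, x != y ->
    forall p, walk_in H x p y -> dw G x y <= (size p).+1}
}.

Lemma walk_decorated_dec_one : irreflexive e -> walk_decorated (dec_one e) set0.
Proof.
move=> e_irr; split=> [x y _ _ xy /=|x y _ _ _ p _]; last exact: leq_trans (leq_b1 _) _.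
rewrite lt0b; split=> [exy|[[|z p] /andP[walk]]]; first by exists [::]; rewrite /walk_in /= exy.
  by move: walk => /= /andP[].
by rewrite /= inE.
Qed.

Lemma path_valid_cons G x z s y :
  path_valid G x (z :: s) y = (0 < dw G x z) && path_valid G z s y.
Proof. by []. Qed.

Lemma path_weight_cons G x z s y :
  path_weight G x (z :: s) y = dw G x z + path_weight G z s y.
Proof. by []. Qed.

Lemma path_weight_gt0 G x s y : path_valid G x s y -> 0 < path_weight G x s y.
Proof. by case: s => [|z s] /andP[dw_gt0 _]; rewrite /path_weight /= addn_gt0 dw_gt0. Qed.

Section Contraction.
Variables (G : dgraph T) (H S : {set T}).
Hypotheses (GH : walk_decorated G H) (SG : S \subset dV G).

Lemma walk_of_valid_path y : y \in dV G -> forall s x, x \in dV G ->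
  uniq (x :: rcons s y) -> all [in dV G :&: S] s -> path_valid G x s y ->
  exists p, walk_in (H :|: S) x p y.
Proof.
have walk_inU x p z : walk_in H x p z -> path e x (rcons p z) && all [in H :|: S] p.
  by case/andP=> -> /allP pH; apply/allP => w /pH; rewrite inE => ->.
move=> yG; elim=> [|z s IH] x xG /= /andP[xNzsy zsy_uniq].
  move=> _ /andP[dw_xy _]; rewrite mem_seq1 in xNzsy.
  by have [p /walk_inU] := (dw_gt0_walk GH xG yG xNzsy).1 dw_xy; exists p.
case/andP; rewrite inE => /andP[zG zS] sGS /andP[dw_xz s_valid].
have [p2 /andP[p2_path p2S]] := IH z zG zsy_uniq sGS s_valid.
have xz : x != z by apply: contraNneq xNzsy => ->; apply: mem_head.
have [p1 /walk_inU/andP[p1_path p1S]] := (dw_gt0_walk GH xG zG xz).1 dw_xz.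
exists (p1 ++ z :: p2).
rewrite /walk_in rcons_cat /= -cat_rcons cat_path last_rcons p1_path p2_path.
by rewrite all_cat p1S /= inE zS orbT.
Qed.

(* [pre] collects the vertices of [H] passed since the last vertex of [S]. *)
Lemma valid_path_of_walk y : y \in dV G -> forall p x pre, x \in dV G ->
  all [in H] pre -> all [in H :|: S] p -> path e x (pre ++ rcons p y) ->
  uniq (x :: pre ++ rcons p y) ->
  path_valid G x [seq z <- p | z \in S] y &&
  (path_weight G x [seq z <- p | z \in S] y <= size pre + size p + 1).
Proof.
move=> yG; elim=> [|z p IH] x pre xG preH.
  move=> _ walk /andP[xNprey _].
  have xy : x != y by apply: contraNneq xNprey => ->; rewrite mem_cat mem_seq1 eqxx orbT.
  have pre_walk : walk_in H x pre y by rewrite /walk_in -cats1 walk preH.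
  rewrite /path_valid /path_weight /= andbT !addn0 addn1.
  rewrite (dw_le_walk GH xG yG xy pre_walk) andbT.
  by apply/(dw_gt0_walk GH xG yG xy); exists pre.
rewrite rcons_cons [all _ (_ :: _)]/= => /andP[zHS pHS] walk walk_uniq.
have [xz zpy_uniq] : x != z /\ uniq (z :: rcons p y).
  move: walk_uniq; rewrite cons_uniq cat_uniq => /andP[xNwalk /and3P[_ _ zpy_uniq]].
  by split=> //; apply: contraNneq xNwalk => ->; rewrite mem_cat mem_head orbT.
move: walk walk_uniq; rewrite -cat_rcons cat_path last_rcons => /andP[pre_path p_path].
move=> walk_uniq.
rewrite [filter _ _]/=; case: ifP => zS; last first.
  have zH : z \in H by move: zHS; rewrite inE zS orbF.
  have := IH x (rcons pre z) xG; rewrite all_rcons zH preH cat_path last_rcons.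
  by rewrite pre_path p_path size_rcons => /(_ isT pHS isT walk_uniq); rewrite addSnnS.
have zG : z \in dV G by apply: (subsetP SG).
have pre_walk : walk_in H x pre z by rewrite /walk_in pre_path preH.
have /andP[valid_zy weight_zy] := IH z [::] zG isT pHS p_path zpy_uniq.
rewrite path_valid_cons path_weight_cons valid_zy andbT; apply/andP; split.
  by apply/(dw_gt0_walk GH xG zG xz); exists pre.
apply: leq_trans (leq_add (dw_le_walk GH xG zG xz pre_walk) weight_zy) _.
by rewrite /= add0n addSnnS -addnA !addn1.
Qed.

Lemma quot_path_of_walk x y p :
  x \in dV G :\: S -> y \in dV G :\: S -> x != y -> walk_in (H :|: S) x p y ->
  exists2 s, s \in interiors (dV G :&: S) &
    path_valid G x s y && (path_weight G x s y <= (size p).+1).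
Proof.
rewrite !inE => /andP[xNS xG] /andP[yNS yG] xy /andP[walk pHS].
have [p' [walk' p'_uniq p'_sub]] : exists p', [/\ path e x p', uniq (x :: p'),
    {subset p' <= rcons p y} & last x p' = last x (rcons p y)].
  by case: (shortenP walk) => p'; exists p'.
rewrite last_rcons; case/lastP: p' walk' p'_uniq p'_sub => [/= _ _ _ yx|p1 z].
  by rewrite yx eqxx in xy.
rewrite last_rcons => walk1 p1y_uniq p1y_sub zy; subst z.
have [yNp1 p1_uniq] : y \notin p1 /\ uniq p1.
  by move: p1y_uniq; rewrite cons_uniq rcons_uniq => /andP[_ /andP[]].
have p1_sub : {subset p1 <= p}.
  move=> w wp1; have := p1y_sub w; rewrite mem_rcons in_cons wp1 orbT => /(_ isT).
  by rewrite mem_rcons in_cons => /orP[/eqP wy|//]; rewrite -wy wp1 in yNp1.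
exists [seq z <- p1 | z \in S].
  rewrite mem_interiors filter_uniq //=; apply/allP => w; rewrite mem_filter.
  by case/andP=> wS _; rewrite inE wS (subsetP SG).
have p1HS : all [in H :|: S] p1 by apply/allP => w /p1_sub /(allP pHS).
have /andP[-> weight] := valid_path_of_walk yG (pre := [::]) xG isT p1HS walk1 p1y_uniq.
by apply: leq_trans weight _; rewrite add0n addn1 ltnS uniq_leq_size.
Qed.

(* [seqmin [::] = 0]: an edge of [quot G S] needs a valid path through [S]. *)
Lemma walk_decorated_quot : walk_decorated (quot G S) (H :|: S).
Proof.
have weight_in s x y : s \in interiors (dV G :&: S) -> path_valid G x s y ->
    path_weight G x s y \in path_weights G S x y.
  by move=> s_int s_valid; apply/mapP; exists s; rewrite ?mem_filter ?s_valid.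
split=> x y /= xGS yGS xy; rewrite xGS yGS xy /=; last first.
  move=> p /(quot_path_of_walk xGS yGS xy)[s s_int /andP[s_valid weight]].
  by apply: leq_trans weight; apply/seqmin_le/weight_in.
have [xG yG] : x \in dV G /\ y \in dV G.
  by move: xGS yGS; rewrite !inE => /andP[_ ->] /andP[_ ->].
split=> [|[p /(quot_path_of_walk xGS yGS xy)[s s_int /andP[s_valid _]]]].
  case E: (path_weights G S x y) => [//|w ws] _.
  have : w \in path_weights G S x y by rewrite E mem_head.
  case/mapP => s; rewrite mem_filter => /andP[s_valid s_int] _.
  have sGS : all [in dV G :&: S] s by move: s_int; rewrite mem_interiors => /andP[].
  exact: (walk_of_valid_path yG xG (contraction_path_uniq xGS yGS xy s_int) sGS s_valid).
apply: seqmin_gt0.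
  by apply/eqP => E; have := weight_in _ _ _ s_int s_valid; rewrite E.
by apply/allP => w /mapP[s']; rewrite mem_filter => /andP[/path_weight_gt0 ? _ ->].
Qed.

End Contraction.
End Walks.

Section ShortestWalk.
Variables (T : finType) (e : rel T) (H : {set T}) (x y : T) (p : seq T).
Hypotheses (e_irr : irreflexive e) (e_sym : symmetric e) (xy : x != y).
Hypothesis p_walk : walk_in e H x p y.
Hypothesis p_shortest : forall p', walk_in e H x p' y -> size p <= size p'.

Let w := x :: rcons p y.

Lemma size_shortest_walk : size w = (size p).+2.
Proof. by rewrite /= size_rcons. Qed.

Lemma shortest_walk_chordless i j : i.+1 < j -> j < size w ->
  ~~ e (nth x w i) (nth x w j).
Proof.
rewrite size_shortest_walk ltnS => ij j_le; apply/negP => chord.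
have [walk pH] := andP p_walk.
have [i_le j_le'] : i <= size p /\ j.-1 <= size p by split; lia.
have ij_le : i < j <= size (rcons p y) by rewrite size_rcons (ltnW ij) j_le.
have : walk_in e H x (take i p ++ drop j.-1 p) y.
  have sub_pH q : {subset q <= p} -> all [in H] q.
    by move=> qp; apply/allP => z /qp /(allP pH).
  rewrite /walk_in all_cat (sub_pH _ (@mem_take _ _ _)) (sub_pH _ (@mem_drop _ _ _)).
  rewrite rcons_cat -drop_rcons // -(takel_cat [:: y] i_le) cats1.
  by rewrite andbT (path_shortcut walk ij_le chord).
move/p_shortest; rewrite size_cat size_takel // size_drop; lia.
Qed.

Lemma shortest_walk_adj i : i.+1 < size w -> e (nth x w i) (nth x w i.+1).
Proof.
rewrite size_shortest_walk ltnS => i_lt.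
by have /andP[/pathP walk _] := p_walk; apply: walk; rewrite size_rcons.
Qed.

Lemma shortest_walk_uniq : uniq w.
Proof.
apply/(uniqP x) => i j; rewrite !inE => i_lt j_lt wij.
wlog ij : i j i_lt j_lt wij / i < j.
  move=> sym_case; case: (ltngtP i j) => [|ji|//]; first exact: sym_case.
  by apply/esym/sym_case.
exfalso; have [j_last|j_lt'] := eqVneq j.+1 (size w); last first.
  have j1_lt : j.+1 < size w by rewrite ltn_neqAle j_lt' j_lt.
  by have := shortest_walk_chordless (ij : i.+1 < j.+1) j1_lt; rewrite wij shortest_walk_adj.
have wj : nth x w j = y.
  by move: j_last; rewrite size_shortest_walk => -[->]; rewrite /w /= nth_rcons ltnn eqxx.
case: i i_lt ij wij => [|i] i_lt ij wij; first by move: xy; rewrite -wj -wij eqxx.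
have := shortest_walk_chordless ij j_lt; rewrite -wij.
by rewrite shortest_walk_adj // (ltn_trans ij j_lt).
Qed.

Lemma shortest_walk_edge i j : i < size w -> j < size w ->
  e (nth x w i) (nth x w j) = (i.+1 == j) || (j.+1 == i).
Proof.
have edge_lt k l : k < l -> l < size w -> e (nth x w k) (nth x w l) = (k.+1 == l).
  move=> kl l_lt; have [kl_eq|kl'] := eqVneq k.+1 l.
    by rewrite -kl_eq shortest_walk_adj // kl_eq.
  by apply/negbTE/shortest_walk_chordless => //; rewrite ltn_neqAle kl' kl.
move=> i_lt j_lt; case: (ltngtP i j) => [ij|ji|<-].
- by rewrite edge_lt // (gtn_eqF (leqW ij)) orbF.
- by rewrite e_sym edge_lt // (gtn_eqF (leqW ji)).
- by rewrite e_irr (gtn_eqF (ltnSn i)).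
Qed.

Lemma shortest_walk_induces_path :
  induces_path e [set z in w] /\ #|[set z in w]| = (size p).+2.
Proof.
have card_w : #|[set z in w]| = size w.
  by rewrite cardsE; apply/card_uniqP/shortest_walk_uniq.
split; last by rewrite card_w size_shortest_walk.
exists (fun i : 'I_#|[set z in w]| => nth x w i); split.
- move=> i j /eqP; rewrite nth_uniq -?card_w ?ltn_ord ?shortest_walk_uniq //.
  by move/eqP/val_inj.
- by move=> i; rewrite inE mem_nth // -card_w ltn_ord.
- by move=> i j; rewrite shortest_walk_edge -?card_w ?ltn_ord.
Qed.

End ShortestWalk.

Section LongestInducedPath.
Variables (T : finType) (e : rel T) (K : nat).
Hypotheses (e_irr : irreflexive e) (e_sym : symmetric e).
Hypothesis K_max : forall M : {set T}, induces_path e M -> #|M| <= K.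

Lemma walk_decorated_dw_bounded G H : walk_decorated e G H -> dw_bounded (K - 1) G.
Proof.
move=> GH x y xG yG xy; have [->//|dw_gt0] := posnP (dw G x y).
have [p0 p0_walk] := (dw_gt0_walk GH xG yG xy).1 dw_gt0.
pose has_walk n := [exists t : n.-tuple T, walk_in e H x t y].
have some_walk : exists n, has_walk n.
  by exists (size p0); apply/existsP; exists (in_tuple p0).
have [n /existsP[p p_walk] n_min] := ex_minnP some_walk.
have p_shortest p' : walk_in e H x p' y -> size p <= size p'.
  by move=> p'_walk; rewrite size_tuple; apply: n_min; apply/existsP; exists (in_tuple p').
have [p_path card_p] := shortest_walk_induces_path e_irr e_sym xy p_walk p_shortest.
have := K_max p_path; have := dw_le_walk GH xG yG xy p_walk; rewrite card_p; lia.
Qed.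

Lemma zeta_comp_pr_stable (R : comNzRingType) (q : R) m al G H :
  K - 1 <= m -> walk_decorated e G H -> zeta_comp q m al G = zeta_comp q (K - 1) al G.
Proof.
move=> Km; elim: al G H => [|a [|b al] IH] G H GH //=.
apply: eq_bigr => S /andP[SG _]; have GSH := walk_decorated_quot GH SG.
have bG := dw_bounded_induced (S := S) (walk_decorated_dw_bounded GH).
have bGS := walk_decorated_dw_bounded GSH.
congr (_ * _)%R.
  by rewrite (zeta_equiv q (pr_bounded bG Km)) (zeta_equiv q (pr_bounded bG (leqnn _))).
transitivity (zeta_comp q m (b :: al) (quot G S)).
  exact (zeta_comp_equiv q m (b :: al) (pr_bounded bGS Km)).
rewrite (IH _ _ GSH).
exact (zeta_comp_equiv q _ (b :: al) (dg_equiv_sym (pr_bounded bGS (leqnn _)))).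
Qed.

End LongestInducedPath.

Theorem mainTheorem3 (n : nat) (e : rel 'I_n) (M : {set 'I_n})
  (R : comNzRingType) (q : R) :
  simple_graph e -> connected_graph e ->
  induces_path e M ->
  (forall M' : {set 'I_n}, induces_path e M' -> (#|M'| <= #|M|)%N) ->
  forall k : nat, (#|M| <= k)%N ->
    Psi k q (dec_one e) = Psi (#|M| - 1) q (dec_one e).
Proof.
move=> [e_irr e_sym] _ _ M_max k M_le_k; apply: functional_extensionality => al.
have {}e_irr : irreflexive e by move=> x; apply/negbTE.
rewrite /Psi; case: ifP => // _.
apply: (zeta_comp_pr_stable e_irr e_sym M_max q al _ (walk_decorated_dec_one e_irr)).
exact: leq_trans (leq_subr 1 _) M_le_k.
Qed.
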